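(* Let $m\ge n$, let $D$ be an $m\times n$ real matrix of rank $n$, and let $S$ be a compact subset of $\mathbb{R}^n_{>0}$. Then there exists a function $\alpha$ of class $\mathcal{K}_\infty$ such that $|D(\rho(x)-\rho(a))|^2\ge\alpha(|x-a|)$ for all $a\in S$ and all $x\in\mathbb{R}^n_{>0}$, where $\rho(x)=(\ln x_1,\dots,\ln x_n)'$.
   Context: $|\cdot|$ is the Euclidean norm; $\mathcal{K}_\infty$ is the class of continuous strictly increasing unbounded functions $[0,\infty)\to[0,\infty)$ vanishing at $0$. *)

From HB Require Import structures.
From mathcomp Require Import all_boot all_order all_algebra.
From mathcomp Require Import boolp classical_sets reals topology normedtype exp.
Set Implicit Arguments. Unset Strict Implicit. Unset Printing Implicit Defensive.
Import Order.TTheory GRing.Theory Num.Theory.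
Import numFieldNormedType.Exports.
Local Open Scope classical_set_scope.
Local Open Scope ring_scope.

Definition eucl_norm (R : realType) (k : nat) (x : 'cV[R]_k) : R :=
  Num.sqrt (\sum_(i < k) (x i 0) ^+ 2).

Definition pos_orthant (R : realType) (k : nat) : set 'cV[R]_k :=
  [set x | forall i : 'I_k, 0 < x i 0].

Definition rho (R : realType) (k : nat) (x : 'cV[R]_k) : 'cV[R]_k :=
  \col_i ln (x i 0).

(* class K_infty: continuous, strictly increasing, unbounded functions
   [0,oo) -> [0,oo) vanishing at 0 (only values on [0,oo) matter). *)
Definition K_infty (R : realType) (alpha : R -> R) : Prop :=
  [/\ {within `[0, +oo[%classic, continuous alpha},
      alpha 0 = 0,
      (forall r, 0 <= r -> 0 <= alpha r),
      (forall r s, 0 <= r -> r < s -> alpha r < alpha s)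
    & (forall M : R, exists r, 0 <= r /\ M < alpha r)].

From mathcomp Require Import all_boot all_order all_algebra.
From mathcomp Require Import classical_sets reals topology normedtype exp.
From mathcomp Require Import sequences ring lra.

(* Compactness bounds the coordinates of the points of S by some M > 0, and a
   left inverse of D gives |v_i| <= C |D v| for every coordinate i.  Pick the
   coordinate i maximising |x_i - a_i|, so that |x - a| <= n |x_i - a_i|.  With
   t = x_i / a_i one has |ln t| >= ln (1 + |t - 1|) >= ln (1 + |x_i - a_i| / M),
   hence alpha r := C^-2 ln (1 + r / (n M))^2 is a K_infty lower bound. *)

Set Implicit Arguments.
Unset Strict Implicit.
Unset Printing Implicit Defensive.
Import Order.TTheory GRing.Theory Num.Theory.
Import numFieldNormedType.Exports.
Local Open Scope classical_set_scope.
Local Open Scope ring_scope.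

Section K_infty_closure.
Variable R : realType.
Implicit Types (f : R -> R) (r s : R).

Lemma K_infty_sqr f : K_infty f -> K_infty (fun r => f r ^+ 2).
Proof.
case=> f_cont f0 f_ge0 f_incr f_unbounded; split.
- by move=> r; apply: cvgM; apply: f_cont.
- by rewrite f0 expr0n.
- by move=> r _; rewrite sqr_ge0.
- move=> r s r_ge0 rs; have s_ge0 := ltW (le_lt_trans r_ge0 rs).
  by rewrite ltr_pXn2r ?nnegrE ?f_ge0 ?f_incr.
- move=> M; have [r [r_ge0 fr_gt]] := f_unbounded (`|M| + 1).
  exists r; split => //.
  have fr_ge1 : 1 <= f r by have := normr_ge0 M; lra.
  have : f r <= f r ^+ 2 by rewrite expr2 ler_peMl ?(le_trans ler01).
  have := real_ler_norm (num_real M); lra.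
Qed.

Lemma K_inftyZ c f : 0 < c -> K_infty f -> K_infty (fun r => c * f r).
Proof.
move=> c_gt0 [f_cont f0 f_ge0 f_incr f_unbounded]; split.
- by move=> r; apply: cvgMl_tmp; apply: f_cont.
- by rewrite f0 mulr0.
- by move=> r /f_ge0; apply: mulr_ge0; apply: ltW.
- by move=> r s r_ge0 rs; rewrite ltr_pM2l ?f_incr.
- move=> M; have [r [r_ge0 fr_gt]] := f_unbounded (M / c).
  by exists r; split; rewrite // mulrC -ltr_pdivrMr.
Qed.

Lemma K_infty_ln1D B : 0 < B -> K_infty (fun r => ln (1 + r / B)).
Proof.
move=> B_gt0; have B_ge0 := ltW B_gt0.
have arg_gt0 r : 0 <= r -> 0 < 1 + r / B by move=> r_ge0; rewrite ltr_pwDl ?divr_ge0.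
split.
- apply: continuous_in_subspaceT => r; rewrite inE /= in_itv /= andbT => r_ge0.
  apply: (@continuous_comp _ _ _ (fun r => 1 + r / B)); last exact/continuous_ln/arg_gt0.
  by apply: cvgD; [exact: cvg_cst | apply: cvgMr_tmp; exact: cvg_id].
- by rewrite mul0r addr0 ln1.
- by move=> r r_ge0; rewrite ln_ge0 // lerDl divr_ge0.
- move=> r s r_ge0 rs; have s_ge0 : 0 <= s by rewrite ltW ?(le_lt_trans r_ge0).
  by rewrite ltr_ln ?posrE ?arg_gt0 // ltrD2l ltr_pM2r ?invr_gt0.
- move=> M; pose y := `|M| + 1; have y_gt0 : 0 < y by rewrite ltr_wpDl.
  exists (B * (expR y - 1)); split.
    by rewrite mulr_ge0 // subr_ge0; exact/ltW/pexpR_gt1.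
  rewrite mulrAC divff ?gt_eqF // mul1r addrC subrK expRK.
  by have := real_ler_norm (num_real M); rewrite /y; lra.
Qed.

End K_infty_closure.

Section coordinates.
Variable R : realType.

Lemma eucl_norm_ge0 k (w : 'cV[R]_k) : 0 <= eucl_norm w.
Proof. exact: sqrtr_ge0. Qed.

Lemma ler_coord_eucl_norm k (w : 'cV[R]_k) j : `|w j 0| <= eucl_norm w.
Proof.
rewrite /eucl_norm -sqrtr_sqr ler_wsqrtr // (bigD1 j) //= lerDl.
by rewrite sumr_ge0 // => i _; rewrite sqr_ge0.
Qed.

Lemma eucl_norm_dim0 (x : 'cV[R]_0) : eucl_norm x = 0.
Proof. by rewrite /eucl_norm big_ord0 sqrtr0. Qed.

Lemma eucl_norm_le_max_coord k (x : 'cV[R]_k.+1) :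
  exists i, eucl_norm x <= k.+1%:R * `|x i 0|.
Proof.
have [i _ x_i_max] := @arg_maxP _ _ _ ord0 xpredT (fun j => `|x j 0|) isT.
exists i; rewrite /eucl_norm -[leRHS]ger0_norm ?mulr_ge0 //.
rewrite -sqrtr_sqr ler_wsqrtr //.
apply: (@le_trans _ _ (\sum_(j < k.+1) `|x i 0| ^+ 2)).
  apply: ler_sum => j _; rewrite -real_normK ?num_real //.
  by rewrite ler_pXn2r ?nnegrE //; apply: x_i_max.
rewrite sumr_const card_ord -[leLHS]mulr_natl exprMn.
by rewrite ler_wpM2r ?sqr_ge0 // ler_eXnr // ler1n.
Qed.

Lemma full_col_rank_coord_le m n (D : 'M[R]_(m, n)) : \rank D = n ->
  exists2 C, 0 < C & forall (v : 'cV_n) i, `|v i 0| <= C * eucl_norm (D *m v).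
Proof.
move=> rkD; have /row_fullP [L LD1] : row_full D by rewrite /row_full rkD.
pose C := \sum_i \sum_j `|L i j|.
have C_ge0 : 0 <= C by apply: sumr_ge0 => i _; apply: sumr_ge0.
exists (C + 1); first exact: ltr_wpDl C_ge0 ltr01.
move=> v i.
set w := D *m v; have -> : v i 0 = (L *m w) i 0 by rewrite mulmxA LD1 mul1mx.
rewrite mxE.
apply: le_trans (ler_norm_sum _ _ _) _.
apply: (@le_trans _ _ ((\sum_j `|L i j|) * eucl_norm w)).
  rewrite mulr_suml; apply: ler_sum => j _.
  by rewrite normrM ler_wpM2l ?ler_coord_eucl_norm.
rewrite ler_wpM2r ?eucl_norm_ge0 //.
suff : \sum_j `|L i j| <= C by lra.
by rewrite /C (bigD1 i) //= lerDl sumr_ge0 // => ? _; rewrite sumr_ge0.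
Qed.

Lemma compact_entry_ub p q (S : set 'M[R]_(p, q)) : compact S ->
  exists2 M, 0 < M & forall a i j, S a -> `|a i j| <= M.
Proof.
move=> /compact_bounded [M0 [M0_real S_bounded]].
exists (`|M0| + 1); first exact: ltr_wpDl (normr_ge0 _) ltr01.
move=> a i j Sa.
apply: le_trans (S_bounded _ _ a Sa); last first.
  by apply: le_lt_trans (real_ler_norm M0_real) _; rewrite ltrDl.
rewrite [leRHS]/Num.norm /= mx_normrE.
exact: (le_bigmax _ _ (i, j)).
Qed.

End coordinates.

Section logarithm.
Variable R : realType.

Lemma ln1D_norm_subr1_le (t : R) : 0 < t -> ln (1 + `|t - 1|) <= `|ln t|.
Proof.
move=> t_gt0; case: (leP 1 t) => t1.
  by rewrite !ger0_norm ?subr_ge0 ?ln_ge0 // addrC subrK.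
rewrite !ltr0_norm ?subr_lt0 ?ln_lt0 ?t_gt0 // -lnV ?posrE //.
rewrite ler_ln ?posrE ?invr_gt0 //; last lra.
have -> : t^-1 = (1 - (t - 1)) + (t - 1) ^+ 2 / t by field; rewrite gt_eqF.
by rewrite lerDl divr_ge0 ?sqr_ge0 ?ltW.
Qed.

Lemma ln1D_dist_le_dist_ln (a x M : R) : 0 < a -> a <= M -> 0 < x ->
  ln (1 + `|x - a| / M) <= `|ln x - ln a|.
Proof.
move=> a_gt0 aM x_gt0; have M_gt0 := lt_le_trans a_gt0 aM.
have xa_gt0 : 0 < x / a by rewrite divr_gt0.
rewrite -ln_div ?posrE //; apply: le_trans (ln1D_norm_subr1_le xa_gt0).
rewrite ler_ln ?posrE ?ltr_wpDr ?divr_ge0 ?(ltW M_gt0) // lerD2l.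
have -> : x / a - 1 = (x - a) / a by field; rewrite gt_eqF.
by rewrite normrM [`|a^-1|]gtr0_norm ?invr_gt0 // ler_wpM2l ?lef_pV2 ?posrE.
Qed.

Lemma ln1D_eucl_dist_le_rho_coord k (a x : 'cV[R]_k.+1) M :
  (forall i, 0 < a i 0 <= M) -> (forall i, 0 < x i 0) ->
  exists i, ln (1 + eucl_norm (x - a) / (k.+1%:R * M)) <= `|(rho x - rho a) i 0|.
Proof.
move=> a_bd x_pos; have [i] := eucl_norm_le_max_coord (x - a); rewrite !mxE => xa_le.
have /andP[a_gt0 aM] := a_bd i; have M_gt0 := lt_le_trans a_gt0 aM.
exists i; rewrite !mxE; apply: le_trans (ln1D_dist_le_dist_ln a_gt0 aM (x_pos i)).
rewrite ler_ln ?posrE ?ltr_wpDr ?divr_ge0 ?mulr_ge0 ?eucl_norm_ge0 ?(ltW M_gt0) // lerD2l.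
by rewrite invfM mulrA ler_pM2r ?invr_gt0 // ler_pdivrMr ?ltr0Sn // mulrC.
Qed.

End logarithm.

Theorem lemmaA2 (R : realType) (m n : nat) (D : 'M[R]_(m, n))
  (S : set 'cV[R]_n) :
  (n <= m)%N -> \rank D = n ->
  compact S -> S `<=` @pos_orthant R n ->
  exists alpha : R -> R, K_infty alpha /\
    forall a x, S a -> pos_orthant x ->
      alpha (eucl_norm (x - a)) <= (eucl_norm (D *m (rho x - rho a))) ^+ 2.
Proof.
(* [n <= m] already follows from [\rank D = n]. *)
move=> _ rkD cS S_pos; case: n => [|n] in D S rkD cS S_pos *.
  exists (fun r => ln (1 + r / 1)); split => [|a x _ _]; first exact: K_infty_ln1D.
  by rewrite eucl_norm_dim0 mul0r addr0 ln1 sqr_ge0.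
have [M M_gt0 S_le_M] := compact_entry_ub cS.
have [C C_gt0 D_coord_le] := full_col_rank_coord_le rkD.
exists (fun r => C^-2 * ln (1 + r / (n.+1%:R * M)) ^+ 2); split.
  by apply/K_inftyZ/K_infty_sqr/K_infty_ln1D; rewrite ?invr_gt0 ?exprn_gt0 ?mulr_gt0.
move=> a x Sa x_pos.
have a_bd i : 0 < a i 0 <= M.
  by rewrite S_pos // (le_trans (ler_norm _) (S_le_M _ _ _ Sa)).
have [i ln_le] := ln1D_eucl_dist_le_rho_coord a_bd x_pos.
rewrite ler_pdivrMl ?exprn_gt0 // -exprMn.
rewrite ler_pXn2r ?nnegrE ?mulr_ge0 ?eucl_norm_ge0 ?(ltW C_gt0) //.
  exact: le_trans ln_le (D_coord_le _ _).
by apply: ln_ge0; rewrite lerDl divr_ge0 ?mulr_ge0 ?eucl_norm_ge0 ?(ltW M_gt0).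
Qed.
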